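(* Let $\alpha=\exp\left(\frac{2\pi i}{5}\right)$, let $c,x\in\mathbb{C}$, and let $(a_1,A_1),\dots,(a_p,A_p)$ and $(b_1,B_1),\dots,(b_q,B_q)$ be parameter pairs ($a_j,b_j\in\mathbb{C}$, $A_j,B_j$ nonzero reals) such that all Pochhammer symbols involved are well defined and all series involved converge. Then $$\sum_{k=0}^{4}{}_p\Psi^{*}_q\left[\begin{array}{c}(a_1,A_1),\dots,(a_p,A_p);\\(b_1,B_1),\dots,(b_q,B_q);\end{array} c(x\alpha^k)^2\right] =5\,{}_p\Psi^{*}_{q+4}\left[\begin{array}{c}(a_1,5A_1),\dots,(a_p,5A_p);\\ \left(\tfrac15,1\right),\left(\tfrac25,1\right),\left(\tfrac35,1\right),\left(\tfrac45,1\right),(b_1,5B_1),\dots,(b_q,5B_q);\end{array}\left(\frac{cx^2}{5}\right)^5\right].$$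
   Context: For $\lambda,\nu\in\mathbb{C}$ the Pochhammer symbol is $(\lambda)_\nu=\Gamma(\lambda+\nu)/\Gamma(\lambda)$ (with $(\lambda)_0=1$). The normalized Fox–Wright function is $${}_p\Psi^{*}_q\left[\begin{array}{c}(\alpha_1,A_1),\dots,(\alpha_p,A_p);\\(\beta_1,B_1),\dots,(\beta_q,B_q);\end{array}z\right]=\sum_{n=0}^{\infty}\frac{(\alpha_1)_{nA_1}\cdots(\alpha_p)_{nA_p}}{(\beta_1)_{nB_1}\cdots(\beta_q)_{nB_q}}\frac{z^n}{n!},$$ where $\alpha_i,\beta_j\in\mathbb{C}$ and $A_i,B_j$ are nonzero reals. Values of parameters and variables for which the expressions do not make sense are excluded. *)

From Stdlib Require Import Reals List Factorial.
From Coquelicot Require Import Coquelicot.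
Import ListNotations.
Open Scope R_scope.

Definition cexp (z : C) : C :=
  (exp (fst z) * cos (snd z), exp (fst z) * sin (snd z)).

Fixpoint cpow (z : C) (n : nat) : C :=
  match n with
  | O => 1%C
  | S m => (z * cpow z m)%C
  end.

Fixpoint shifted_prod (z : C) (n : nat) : C :=
  match n with
  | O => z
  | S m => (shifted_prod z m * (z + RtoC (INR (S m))))%C
  end.

Definition Gamma_seq (z : C) (n : nat) : C :=
  (RtoC (INR (fact n)) * cexp (z * RtoC (ln (INR n))) / shifted_prod z n)%C.

(** The complex Gamma function, defined (for z not a non-positive integer)
    by the Euler--Gauss limit  Gamma z = lim_n n! n^z / (z(z+1)...(z+n)). *)
Definition Gamma (z : C) : C :=
  iota (fun g : C_CompleteNormedModule =>
          filterlim (Gamma_seq z) eventually (locally g)).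

Definition Gamma_pole (z : C) : Prop := exists m : nat, z = RtoC (- INR m).

Definition pochhammer (l : C) (nu : R) : C :=
  if Req_EM_T nu 0 then 1%C else (Gamma (l + RtoC nu) / Gamma l)%C.

Definition pochhammer_ok (l : C) (nu : R) : Prop :=
  nu = 0 \/ (~ Gamma_pole l /\ ~ Gamma_pole (l + RtoC nu)%C).

Definition poch_prod (ps : list (C * R)) (n : nat) : C :=
  fold_right (fun p acc => (pochhammer (fst p) (INR n * snd p) * acc)%C) 1%C ps.

Definition FW_term (ps qs : list (C * R)) (z : C) (n : nat) : C :=
  (poch_prod ps n / poch_prod qs n * cpow z n / RtoC (INR (fact n)))%C.

Definition FoxWright (ps qs : list (C * R)) (z : C) : C :=
  iota (fun s : C_CompleteNormedModule => is_series (FW_term ps qs z) s).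

Definition params_ok (ps : list (C * R)) : Prop :=
  List.Forall (fun p => snd p <> 0) ps.

Definition FW_poch_ok (ps qs : list (C * R)) : Prop :=
  forall n : nat,
    List.Forall (fun p => pochhammer_ok (fst p) (INR n * snd p)) ps /\
    List.Forall (fun p => pochhammer_ok (fst p) (INR n * snd p)) qs.

Definition scale5 (ps : list (C * R)) : list (C * R) :=
  map (fun p => (fst p, 5 * snd p)) ps.

Definition alpha5 : C := cexp (0, 2 * PI / 5).

Definition sum5 (f : nat -> C) : C :=
  fold_right (fun k acc => (f k + acc)%C) 0%C (List.seq 0 5).

From Stdlib Require Import Reals List Lra Lia Factorial.
From Coquelicot Require Import Coquelicot.
Import ListNotations.

(* Put z_k = c (x alpha^k)^2.  The n-th terms of the five series on the left add up to
   the n-th term at c x^2 times sum_k alpha^(2nk), which is 5 when 5 | n and 0 otherwise.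
   A surviving term n = 5m equals the m-th term of the series on the right by Gauss's
   multiplication formula (5m)! = 5^(5m) m! (1/5)_m (2/5)_m (3/5)_m (4/5)_m.  To use it,
   the Pochhammer symbols (j/5)_m, defined through the Euler-Gauss limit for Gamma, are
   identified with rising factorials: for 0 < a <= 1 that limit exists (the sequence
   increases and is bounded by 1/a), and Gamma(a+1) = a Gamma(a) follows from the limit. *)

Open Scope R_scope.

Lemma exp_convex a x y : 0 <= a <= 1 ->
  exp (a * x + (1 - a) * y) <= a * exp x + (1 - a) * exp y.
Proof.
  intros Ha. set (m := a * x + (1 - a) * y).
  assert (Hx : exp x = exp m * exp (x - m)) by (rewrite <- exp_plus; f_equal; ring).
  assert (Hy : exp y = exp m * exp (y - m)) by (rewrite <- exp_plus; f_equal; ring).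
  assert (Hm : a * (x - m) + (1 - a) * (y - m) = 0) by (unfold m; ring).
  pose proof (exp_pos m) as Hpos.
  assert (Tx : exp m * (1 + (x - m)) <= exp m * exp (x - m))
    by (apply Rmult_le_compat_l; [lra | apply exp_ineq1_le]).
  assert (Ty : exp m * (1 + (y - m)) <= exp m * exp (y - m))
    by (apply Rmult_le_compat_l; [lra | apply exp_ineq1_le]).
  rewrite Hx, Hy. nra.
Qed.

Lemma Rpower_le_bernoulli y a : 0 < y -> 0 <= a <= 1 -> Rpower y a <= 1 + a * (y - 1).
Proof.
  intros Hy Ha. unfold Rpower.
  replace (a * ln y) with (a * ln y + (1 - a) * 0) by ring.
  eapply Rle_trans; [apply exp_convex, Ha|].
  rewrite exp_ln, exp_0 by exact Hy. lra.
Qed.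

Lemma ln_ge_1_minus_inv y : 0 < y -> 1 - / y <= ln y.
Proof.
  intros Hy. pose proof (exp_ineq1_le (ln (/ y))) as H.
  rewrite exp_ln, ln_Rinv in H by (auto with real). lra.
Qed.

Lemma Rpower_ge_tangent y a : 0 < y -> 0 <= a -> 1 + a * (1 - / y) <= Rpower y a.
Proof.
  intros Hy Ha. unfold Rpower. eapply Rle_trans; [|apply exp_ineq1_le].
  apply Rplus_le_compat_l, Rmult_le_compat_l; [lra | now apply ln_ge_1_minus_inv].
Qed.

Lemma Rpower_succ_split x a : 0 < x ->
  Rpower (x + 1) a = Rpower x a * Rpower ((x + 1) / x) a.
Proof.
  intros Hx. rewrite Rpower_mult_distr by (try apply Rdiv_lt_0_compat; lra).
  f_equal. field. lra.
Qed.

Lemma Rpower_succ_ge x a : 0 < x -> 0 <= a ->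
  Rpower x a * (x + 1 + a) <= (x + 1) * Rpower (x + 1) a.
Proof.
  intros Hx Ha. rewrite Rpower_succ_split by exact Hx.
  pose proof (Rpower_ge_tangent ((x + 1) / x) a ltac:(apply Rdiv_lt_0_compat; lra) Ha) as H.
  replace (1 + a * (1 - / ((x + 1) / x))) with ((x + 1 + a) / (x + 1)) in H
    by (field; lra).
  pose proof (exp_pos (a * ln x)). unfold Rpower in *.
  apply (Rmult_le_compat_l (x + 1)) in H; [|lra].
  replace ((x + 1) * ((x + 1 + a) / (x + 1))) with (x + 1 + a) in H by (field; lra).
  nra.
Qed.

Lemma Rpower_succ_le x a : 0 < x -> 0 <= a <= 1 ->
  x * Rpower (x + 1) a <= Rpower x a * (x + a).
Proof.
  intros Hx Ha. rewrite Rpower_succ_split by exact Hx.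
  pose proof (Rpower_le_bernoulli ((x + 1) / x) a ltac:(apply Rdiv_lt_0_compat; lra) Ha) as H.
  replace (1 + a * ((x + 1) / x - 1)) with ((x + a) / x) in H by (field; lra).
  pose proof (exp_pos (a * ln x)). unfold Rpower in *.
  apply (Rmult_le_compat_l x) in H; [|lra].
  replace (x * ((x + a) / x)) with (x + a) in H by (field; lra).
  nra.
Qed.

Fixpoint shifted_prodR (a : R) (n : nat) : R :=
  match n with
  | O => a
  | S m => shifted_prodR a m * (a + INR (S m))
  end.

Lemma shifted_prodR_pos a n : 0 < a -> 0 < shifted_prodR a n.
Proof.
  intros Ha. induction n as [|n IH]; cbn [shifted_prodR]; [exact Ha|].
  apply Rmult_lt_0_compat; [exact IH|]. pose proof (pos_INR (S n)). lra.
Qed.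

Lemma shifted_prodR_succ_l a n : shifted_prodR a (S n) = a * shifted_prodR (a + 1) n.
Proof.
  induction n as [|n IH].
  - simpl. ring.
  - cbn [shifted_prodR] in *. rewrite IH, (S_INR (S n)). ring.
Qed.

Definition gauss_term (s a : R) (n : nat) : R :=
  INR (fact n) * Rpower (INR n + s) a / shifted_prodR a n.

Definition gauss_seq (a : R) : nat -> R := gauss_term 0 a.

Lemma gauss_term_pos s a n : 0 < a -> 0 < gauss_term s a n.
Proof.
  intros Ha. unfold gauss_term, Rpower.
  pose proof (shifted_prodR_pos a n Ha). pose proof (exp_pos (a * ln (INR n + s))).
  pose proof (lt_0_INR _ (lt_O_fact n)).
  apply Rdiv_lt_0_compat; [apply Rmult_lt_0_compat|]; assumption.
Qed.

Lemma gauss_term_succ s a n : 0 < a ->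
  gauss_term s a (S n) * (Rpower (INR n + s) a * (a + INR (S n))) =
  gauss_term s a n * (INR (S n) * Rpower (INR (S n) + s) a).
Proof.
  intros Ha. unfold gauss_term. cbn [shifted_prodR]. rewrite fact_simpl, mult_INR.
  pose proof (shifted_prodR_pos a n Ha). pose proof (pos_INR (S n)).
  field. lra.
Qed.

Lemma gauss_seq_le_succ a n : 0 < a -> (1 <= n)%nat -> gauss_seq a n <= gauss_seq a (S n).
Proof.
  intros Ha Hn. unfold gauss_seq.
  assert (Hx : 0 < INR n) by (apply lt_0_INR; lia).
  pose proof (Rpower_succ_ge (INR n) a Hx ltac:(lra)) as H.
  pose proof (gauss_term_succ 0 a n Ha) as E.
  rewrite !Rplus_0_r, S_INR in E.
  pose proof (gauss_term_pos 0 a n Ha) as Hpos. pose proof (exp_pos (a * ln (INR n))) as Hexp.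
  apply (Rmult_le_reg_r (Rpower (INR n) a * (a + (INR n + 1)))).
  { apply Rmult_lt_0_compat; [exact Hexp | lra]. }
  rewrite E. apply Rmult_le_compat_l; [lra|].
  replace (a + (INR n + 1)) with (INR n + 1 + a) by ring. exact H.
Qed.

Lemma gauss_term_1_le_inv a n : 0 < a <= 1 -> gauss_term 1 a n <= / a.
Proof.
  intros Ha. induction n as [|n IH].
  - unfold gauss_term. cbn [fact shifted_prodR INR]. unfold Rpower.
    rewrite Rplus_0_l, ln_1, Rmult_0_r, exp_0. unfold Rdiv. lra.
  - eapply Rle_trans; [|exact IH].
    assert (Hx : 0 < INR n + 1) by (pose proof (pos_INR n); lra).
    pose proof (Rpower_succ_le (INR n + 1) a Hx ltac:(lra)) as H.
    pose proof (gauss_term_succ 1 a n ltac:(lra)) as E. rewrite S_INR in E.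
    pose proof (gauss_term_pos 1 a n ltac:(lra)) as Hpos.
    pose proof (exp_pos (a * ln (INR n + 1))) as Hexp.
    apply (Rmult_le_reg_r (Rpower (INR n + 1) a * (a + (INR n + 1)))).
    { apply Rmult_lt_0_compat; [exact Hexp | lra]. }
    rewrite E. apply Rmult_le_compat_l; [lra|].
    replace (a + (INR n + 1)) with (INR n + 1 + a) by ring. exact H.
Qed.

Lemma gauss_seq_succ_le_inv a n : 0 < a <= 1 -> gauss_seq a (S n) <= / a.
Proof.
  intros Ha. eapply Rle_trans; [|apply (gauss_term_1_le_inv a (S n) Ha)].
  unfold gauss_seq, gauss_term, Rdiv. apply Rmult_le_compat_r.
  { left. apply Rinv_0_lt_compat, shifted_prodR_pos. lra. }
  apply Rmult_le_compat_l; [apply pos_INR|].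
  pose proof (lt_0_INR (S n) ltac:(lia)).
  apply Rle_Rpower_l; lra.
Qed.

Lemma gauss_seq_cvg a : 0 < a <= 1 -> exists L, 0 < L /\ is_lim_seq (gauss_seq a) L.
Proof.
  intros Ha. set (u := fun n => gauss_seq a (S n)).
  assert (Hu : Un_growing u) by (intros n; apply gauss_seq_le_succ; [lra | lia]).
  assert (Hb : has_ub u).
  { exists (/ a). intros y [n ->]. apply gauss_seq_succ_le_inv, Ha. }
  destruct (growing_cv u Hu Hb) as [L HL]. exists L. split.
  - pose proof (growing_ineq u L Hu HL 0). pose proof (gauss_term_pos 0 a 1 ltac:(lra)).
    unfold u, gauss_seq in *. lra.
  - apply is_lim_seq_incr_1, is_lim_seq_Reals, HL.
Qed.

Lemma is_lim_seq_INR_div_shift c : 0 < c -> is_lim_seq (fun n => INR n / (INR n + c)) 1.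
Proof.
  intros Hc.
  apply is_lim_seq_ext with (fun n => 1 - c * / (INR n + c)).
  { intros n. pose proof (pos_INR n). field. lra. }
  assert (Hinv : is_lim_seq (fun n => / (INR n + c)) 0).
  { apply (is_lim_seq_inv _ p_infty); [|discriminate].
    eapply is_lim_seq_plus; [apply is_lim_seq_INR | apply is_lim_seq_const | reflexivity]. }
  pose proof (is_lim_seq_minus' _ _ _ _ (is_lim_seq_const 1)
    (is_lim_seq_mult' _ _ _ _ (is_lim_seq_const c) Hinv)) as H.
  rewrite Rmult_0_r, Rminus_0_r in H. exact H.
Qed.

Lemma gauss_seq_shift a (L : R) : 0 < a ->
  is_lim_seq (gauss_seq a) L -> is_lim_seq (gauss_seq (a + 1)) (a * L).
Proof.
  intros Ha HL.
  apply is_lim_seq_ext_loc with (fun n => gauss_seq a n * (a * (INR n / (INR n + (a + 1))))).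
  { exists 1%nat. intros n Hn. assert (Hx : 0 < INR n) by (apply lt_0_INR; lia).
    unfold gauss_seq, gauss_term. rewrite !Rplus_0_r, Rpower_plus, Rpower_1 by exact Hx.
    assert (Hs : shifted_prodR (a + 1) n = shifted_prodR a n * (a + INR n + 1) / a).
    { pose proof (shifted_prodR_succ_l a n) as E. cbn [shifted_prodR] in E.
      rewrite S_INR in E. apply (Rmult_eq_reg_l a); [|lra].
      rewrite <- E. field. lra. }
    rewrite Hs. pose proof (shifted_prodR_pos a n Ha). field. lra. }
  rewrite Rmult_comm. apply is_lim_seq_mult'; [exact HL|].
  pose proof (is_lim_seq_mult' _ _ a 1 (is_lim_seq_const a)
    (is_lim_seq_INR_div_shift (a + 1) ltac:(lra))) as H.
  rewrite Rmult_1_r in H. exact H.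
Qed.

Fixpoint rising (a : R) (m : nat) : R :=
  match m with
  | O => 1
  | S k => rising a k * (a + INR k)
  end.

Lemma rising_pos a m : 0 < a -> 0 < rising a m.
Proof.
  intros Ha. induction m as [|m IH]; cbn [rising]; [lra|].
  apply Rmult_lt_0_compat; [exact IH|]. pose proof (pos_INR m). lra.
Qed.

Lemma gauss_seq_shift_nat a (L : R) m : 0 < a ->
  is_lim_seq (gauss_seq a) L -> is_lim_seq (gauss_seq (a + INR m)) (rising a m * L).
Proof.
  intros Ha HL. induction m as [|m IH].
  - cbn [rising INR]. rewrite Rplus_0_r, Rmult_1_l. exact HL.
  - rewrite S_INR, <- Rplus_assoc. cbn [rising].
    replace (rising a m * (a + INR m) * L) with ((a + INR m) * (rising a m * L)) by ring.
    apply gauss_seq_shift; [pose proof (pos_INR m); lra | exact IH].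
Qed.

Lemma is_lim_seq_RtoC (u : nat -> R) (l : R) : is_lim_seq u l ->
  filterlim (fun n => RtoC (u n)) eventually (locally (RtoC l)).
Proof.
  intros H. apply filterlim_locally. intros eps.
  apply is_lim_seq_spec in H. destruct (H eps) as [N HN].
  exists N. intros n Hn. split; [exact (HN n Hn) | apply ball_center].
Qed.

Lemma shifted_prod_RtoC a n : shifted_prod (RtoC a) n = RtoC (shifted_prodR a n).
Proof.
  induction n as [|n IH]; [reflexivity|].
  cbn [shifted_prod shifted_prodR]. rewrite IH, RtoC_mult, RtoC_plus. reflexivity.
Qed.

Lemma cexp_RtoC r : cexp (RtoC r) = RtoC (exp r).
Proof. unfold cexp, RtoC. simpl. rewrite cos_0, sin_0. f_equal; ring. Qed.

Lemma Gamma_seq_RtoC a n : 0 < a -> Gamma_seq (RtoC a) n = RtoC (gauss_seq a n).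
Proof.
  intros Ha. unfold Gamma_seq, gauss_seq, gauss_term, Rpower. rewrite Rplus_0_r.
  rewrite <- RtoC_mult, cexp_RtoC, shifted_prod_RtoC, <- RtoC_mult, <- RtoC_div.
  - reflexivity.
  - apply Rgt_not_eq, shifted_prodR_pos, Ha.
Qed.

Lemma Gamma_RtoC a (L : R) : 0 < a -> is_lim_seq (gauss_seq a) L -> Gamma (RtoC a) = RtoC L.
Proof.
  intros Ha HL. apply (iota_filterlim_locally (Gamma_seq (RtoC a))).
  eapply filterlim_ext; [|exact (is_lim_seq_RtoC _ _ HL)].
  intros n. symmetry. apply Gamma_seq_RtoC, Ha.
Qed.

Lemma pochhammer_RtoC_nat a m : 0 < a <= 1 -> pochhammer (RtoC a) (INR m) = RtoC (rising a m).
Proof.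
  intros Ha. destruct (gauss_seq_cvg a Ha) as [L [HL0 HL]].
  unfold pochhammer. destruct (Req_EM_T (INR m) 0) as [Hm|Hm].
  - apply (INR_eq m 0) in Hm. subst m. reflexivity.
  - rewrite <- RtoC_plus, (Gamma_RtoC (a + INR m) (rising a m * L)), (Gamma_RtoC a L).
    + rewrite <- RtoC_div by lra. f_equal. field. lra.
    + lra.
    + exact HL.
    + pose proof (pos_INR m). lra.
    + apply gauss_seq_shift_nat; [lra | exact HL].
Qed.

Lemma fact_mul5 m : INR (fact (5 * m)) =
  5 ^ (5 * m) * INR (fact m) * rising (1/5) m * rising (2/5) m * rising (3/5) m * rising (4/5) m.
Proof.
  induction m as [|m IH]; [simpl; ring|].
  replace (5 ^ (5 * S m)) with (5 ^ (5 * m) * 5 ^ 5) by (rewrite <- pow_add; f_equal; lia).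
  replace (5 * S m)%nat with (S (S (S (S (S (5 * m))))))%nat by lia.
  rewrite !fact_simpl, !mult_INR, IH. cbn [rising]. rewrite !S_INR, mult_INR. simpl INR.
  field.
Qed.

Open Scope C_scope.

Lemma cpow_Cpow : cpow = Cpow.
Proof. reflexivity. Qed.

Lemma Cpow_alpha5 j : alpha5 ^ j = (cos (INR j * (2 * PI / 5)), sin (INR j * (2 * PI / 5))).
Proof.
  induction j as [|j IH].
  - simpl. rewrite Rmult_0_l, cos_0, sin_0. reflexivity.
  - rewrite Cpow_S, IH. unfold alpha5, cexp. simpl fst; simpl snd.
    rewrite exp_0, !Rmult_1_l, S_INR, (Rmult_plus_distr_r (INR j) 1), Rmult_1_l,
      cos_plus, sin_plus.
    unfold Cmult; simpl. f_equal; ring.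
Qed.

Lemma Cpow_alpha5_5 : alpha5 ^ 5 = 1.
Proof.
  rewrite Cpow_alpha5. replace (INR 5 * (2 * PI / 5))%R with (2 * PI)%R by (simpl; field).
  rewrite cos_2PI, sin_2PI. reflexivity.
Qed.

Lemma Cpow_alpha5_neq1 j : (0 < j < 5)%nat -> alpha5 ^ j <> 1.
Proof.
  intros Hj E. rewrite Cpow_alpha5 in E. injection E as _ E.
  pose proof PI_RGT_0.
  assert (Hge1 : (INR 1 <= INR j)%R) by (apply le_INR; lia).
  assert (Hle4 : (INR j <= INR 4)%R) by (apply le_INR; lia).
  simpl in Hge1, Hle4.
  destruct (Nat.le_gt_cases j 2) as [Hle|Hgt].
  - assert (Hle2 : (INR j <= INR 2)%R) by (apply le_INR; lia). simpl in Hle2.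
    assert (0 < sin (INR j * (2 * PI / 5)))%R by (apply sin_gt_0; nra). lra.
  - assert (Hge3 : (INR 3 <= INR j)%R) by (apply le_INR; lia). simpl in Hge3.
    assert (sin (INR j * (2 * PI / 5)) < 0)%R by (apply sin_lt_0; nra). lra.
Qed.

Lemma Cpow_alpha5_mod j : alpha5 ^ j = alpha5 ^ (j mod 5).
Proof.
  rewrite (Nat.div_mod_eq j 5) at 1.
  rewrite Cpow_add_r, Cpow_mult_r, Cpow_alpha5_5, Cpow_1_l. ring.
Qed.

Lemma sum5_Cpow_root_of_unity w : w ^ 5 = 1 -> w <> 1 -> sum5 (Cpow w) = 0.
Proof.
  intros Hw5 Hw1. unfold sum5. cbn [List.seq fold_right].
  assert (Hnz : 1 - w <> 0) by (intros E; apply Hw1; rewrite <- (Cplus_0_l w), <- E; ring).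
  assert (Htel : (1 - w) * (w ^ 0 + (w ^ 1 + (w ^ 2 + (w ^ 3 + (w ^ 4 + 0))))) = 0)
    by (transitivity (1 - w ^ 5); [simpl; ring | rewrite Hw5; ring]).
  apply (f_equal (Cmult (/ (1 - w)))) in Htel.
  rewrite Cmult_assoc, Cinv_l, Cmult_1_l, Cmult_0_r in Htel by exact Hnz. exact Htel.
Qed.

Lemma sum5_Cpow_alpha5_pow j :
  sum5 (Cpow (alpha5 ^ j)) = if j mod 5 =? 0 then RtoC 5 else 0.
Proof.
  rewrite Cpow_alpha5_mod. destruct (Nat.eqb_spec (j mod 5) 0) as [E|E].
  - rewrite E. unfold sum5. cbn [List.seq fold_right]. rewrite !Cpow_1_l.
    unfold RtoC, Cplus. simpl. f_equal; ring.
  - apply sum5_Cpow_root_of_unity.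
    + rewrite <- Cpow_mult_r, Nat.mul_comm, Cpow_mult_r, Cpow_alpha5_5. apply Cpow_1_l.
    + apply Cpow_alpha5_neq1. pose proof (Nat.mod_upper_bound j 5). lia.
Qed.

Lemma sum5_ext f g : (forall k, f k = g k) -> sum5 f = sum5 g.
Proof. intros H. unfold sum5. cbn [List.seq fold_right]. rewrite !H. reflexivity. Qed.

Lemma sum5_mult_l a f : sum5 (fun k => a * f k) = a * sum5 f.
Proof. unfold sum5. cbn [List.seq fold_right]. ring. Qed.

Lemma is_series_sum5 (f : nat -> nat -> C) (s : nat -> C) :
  (forall k, (k < 5)%nat -> is_series (f k) (s k)) ->
  is_series (fun n => sum5 (fun k => f k n)) (sum5 s).
Proof.
  intros H. unfold sum5. cbn [List.seq fold_right].
  assert (Hzero : @is_series C_AbsRing C_NormedModule (fun _ => RtoC 0) (RtoC 0)).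
  { unfold is_series. eapply filterlim_ext; [|apply filterlim_const].
    intros N. induction N as [|N IH]; [symmetry; apply sum_O|].
    rewrite sum_Sn, <- IH. symmetry. apply Cplus_0_r. }
  repeat (apply (is_series_plus (V := C_NormedModule)); [apply H; lia|]). exact Hzero.
Qed.

Lemma filterlim_div_eventually p : (0 < p)%nat ->
  filterlim (fun n => (n / p)%nat) eventually eventually.
Proof.
  intros Hp P [M HM]. exists (p * M)%nat. intros n Hn. apply HM.
  apply Nat.div_le_lower_bound; lia.
Qed.

Lemma is_series_spread {K : AbsRing} {V : NormedModule K} (p : nat) (t : nat -> V) (T : V) :
  (0 < p)%nat -> is_series t T ->
  is_series (fun n => if n mod p =? 0 then t (n / p)%nat else zero) T.
Proof.
  intros Hp H. unfold is_series in *.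
  eapply filterlim_ext; [|exact (filterlim_comp _ _ _ _ _ _ _ _ (filterlim_div_eventually p Hp) H)].
  intros N. induction N as [|N IH].
  - rewrite sum_O, Nat.Div0.div_0_l, Nat.Div0.mod_0_l. apply sum_O.
  - rewrite sum_Sn, <- IH.
    pose proof (Nat.div_mod_eq N p). pose proof (Nat.mod_upper_bound N p ltac:(lia)).
    pose proof (Nat.div_mod_eq (S N) p). pose proof (Nat.mod_upper_bound (S N) p ltac:(lia)).
    destruct (Nat.eqb_spec (S N mod p) 0) as [E|E].
    + replace (S N / p)%nat with (S (N / p)) by nia. apply sum_Sn.
    + replace (S N / p)%nat with (N / p)%nat by nia. symmetry. apply plus_zero_r.
Qed.

Lemma FoxWright_eq ps qs z s : is_series (FW_term ps qs z) s -> FoxWright ps qs z = s.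
Proof. intros H. exact (iota_filterlim_locally (sum_n (FW_term ps qs z)) s H). Qed.

Lemma is_series_FoxWright ps qs z :
  ex_series (FW_term ps qs z) -> is_series (FW_term ps qs z) (FoxWright ps qs z).
Proof. intros [s H]. rewrite (FoxWright_eq _ _ _ _ H). exact H. Qed.

Lemma poch_prod_app l1 l2 n : poch_prod (l1 ++ l2) n = poch_prod l1 n * poch_prod l2 n.
Proof.
  induction l1 as [|p l1 IH]; simpl; [ring|].
  unfold poch_prod in *; simpl. rewrite IH. ring.
Qed.

Lemma poch_prod_scale5 l m : poch_prod (scale5 l) m = poch_prod l (5 * m).
Proof.
  induction l as [|p l IH]; [reflexivity|].
  unfold poch_prod in *. cbn [scale5 map fold_right fst snd]. fold (scale5 l). rewrite IH.
  do 2 f_equal. rewrite mult_INR. simpl (INR 5). ring.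
Qed.

Definition fifths : list (C * R) :=
  [(RtoC (1/5), 1%R); (RtoC (2/5), 1%R); (RtoC (3/5), 1%R); (RtoC (4/5), 1%R)].

Lemma poch_prod_fifths m : poch_prod fifths m =
  RtoC (rising (1/5) m * rising (2/5) m * rising (3/5) m * rising (4/5) m).
Proof.
  unfold poch_prod, fifths. cbn [fold_right fst snd].
  rewrite !Rmult_1_r, !pochhammer_RtoC_nat by lra. rewrite !RtoC_mult. ring.
Qed.

Lemma RtoC_neq_0 (r : R) : r <> 0%R -> RtoC r <> 0.
Proof. intros Hr E. apply Hr. now injection E. Qed.

Lemma Cinv_0 : / (RtoC 0) = 0.
Proof. unfold Cinv, RtoC. simpl. f_equal; unfold Rdiv; ring. Qed.

Lemma Cinv_mult a b : / (a * b) = / a * / b.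
Proof.
  destruct (Classical_Prop.classic (a = 0)) as [->|Ha].
  - rewrite Cmult_0_l, Cinv_0. ring.
  - destruct (Classical_Prop.classic (b = 0)) as [->|Hb].
    + rewrite Cmult_0_r, Cinv_0. ring.
    + field. split; assumption.
Qed.

Lemma FW_term_mul5 ps qs w m :
  FW_term ps qs w (5 * m) = FW_term (scale5 ps) (fifths ++ scale5 qs) ((w / 5) ^ 5) m.
Proof.
  unfold FW_term. rewrite cpow_Cpow, poch_prod_app, !poch_prod_scale5, poch_prod_fifths, fact_mul5.
  pose proof (rising_pos (1/5) m ltac:(lra)). pose proof (rising_pos (2/5) m ltac:(lra)).
  pose proof (rising_pos (3/5) m ltac:(lra)). pose proof (rising_pos (4/5) m ltac:(lra)).
  pose proof (lt_0_INR _ (lt_O_fact m)).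
  assert (0 < 5 ^ (5 * m))%R by (apply pow_lt; lra).
  unfold Cdiv. rewrite Cinv_mult, <- Cpow_mult_r, Cpow_mult_l, Cpow_inv, !RtoC_mult, RtoC_pow.
  - (* [poch_prod qs (5 * m)] may vanish, so its inverse is hidden from [field]. *)
    set (inv_q := / poch_prod qs (5 * m)).
    field. repeat split; try apply Cpow_nz; apply RtoC_neq_0; lra.
  - apply RtoC_neq_0. lra.
Qed.

Lemma FW_term_rotate ps qs c x w n :
  FW_term ps qs (c * cpow (x * w) 2) n = FW_term ps qs (c * cpow x 2) n * w ^ (2 * n).
Proof.
  unfold FW_term. rewrite cpow_Cpow, !Cpow_mult_l, Cpow_mult_r. unfold Cdiv. ring.
Qed.

Lemma double_mod5_eqb n : ((2 * n) mod 5 =? 0) = (n mod 5 =? 0).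
Proof.
  rewrite Nat.Div0.mul_mod, (Nat.mod_small 2) by lia.
  pose proof (Nat.mod_upper_bound n 5 ltac:(lia)).
  destruct (n mod 5) as [|[|[|[|[|r]]]]]; try reflexivity; lia.
Qed.

Lemma sum5_FW_term ps qs c x n :
  sum5 (fun k => FW_term ps qs (c * cpow (x * cpow alpha5 k) 2) n) =
  if n mod 5 =? 0
  then 5 * FW_term (scale5 ps) (fifths ++ scale5 qs) (cpow (c * cpow x 2 / 5) 5) (n / 5)
  else 0.
Proof.
  rewrite (sum5_ext _ (fun k => FW_term ps qs (c * cpow x 2) n * Cpow (alpha5 ^ (2 * n)) k)).
  2: { intros k. rewrite FW_term_rotate, cpow_Cpow, <- !Cpow_mult_r, Nat.mul_comm.
       reflexivity. }
  rewrite sum5_mult_l, sum5_Cpow_alpha5_pow, double_mod5_eqb.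
  destruct (Nat.eqb_spec (n mod 5) 0) as [E|E]; [|apply Cmult_0_r].
  assert (Hn : n = (5 * (n / 5))%nat) by (pose proof (Nat.div_mod_eq n 5); lia).
  rewrite Hn at 1. rewrite FW_term_mul5, cpow_Cpow. apply Cmult_comm.
Qed.

Close Scope C_scope.
Close Scope R_scope.

Theorem theorem5 (ps qs : list (C * R)) (c x : C) :
  params_ok ps -> params_ok qs ->
  FW_poch_ok ps qs ->
  FW_poch_ok (scale5 ps)
    ([(RtoC (1/5), 1%R); (RtoC (2/5), 1%R); (RtoC (3/5), 1%R); (RtoC (4/5), 1%R)]
       ++ scale5 qs) ->
  (forall k : nat, (k < 5)%nat ->
     ex_series (FW_term ps qs (c * cpow (x * cpow alpha5 k) 2)%C)) ->
  ex_series (FW_term (scale5 ps)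
    ([(RtoC (1/5), 1%R); (RtoC (2/5), 1%R); (RtoC (3/5), 1%R); (RtoC (4/5), 1%R)]
       ++ scale5 qs)
    (cpow (c * cpow x 2 / RtoC 5) 5)%C) ->
  sum5 (fun k => FoxWright ps qs (c * cpow (x * cpow alpha5 k) 2)%C)
  = (RtoC 5 * FoxWright (scale5 ps)
       ([(RtoC (1/5), 1%R); (RtoC (2/5), 1%R); (RtoC (3/5), 1%R); (RtoC (4/5), 1%R)]
          ++ scale5 qs)
       (cpow (c * cpow x 2 / RtoC 5) 5))%C.
Proof.
  intros _ _ _ _ Hleft Hright.
  change [(RtoC (1/5), 1%R); (RtoC (2/5), 1%R); (RtoC (3/5), 1%R); (RtoC (4/5), 1%R)]
    with fifths in *.
  pose proof (is_series_sum5 _ _ (fun k Hk => is_series_FoxWright _ _ _ (Hleft k Hk)))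
    as Hsum.
  pose proof (is_series_scal (RtoC 5) _ _
    (is_series_spread 5 _ _ ltac:(lia) (is_series_FoxWright _ _ _ Hright))) as Hspread.
  apply (is_series_ext _ (fun n => sum5 (fun k => FW_term ps qs (c * cpow (x * cpow alpha5 k) 2) n)))
    in Hspread.
  - exact (filterlim_locally_unique _ _ _ Hsum Hspread).
  - intros n. rewrite sum5_FW_term.
    destruct (n mod 5 =? 0); [reflexivity | apply Cmult_0_r].
Qed.
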